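(* Let $\rho\in\mathcal{X}_2$, i.e. $\rho$ is an $\mathrm{SL}(2,\mathbb{C})$ character of the one-holed torus with $\mathrm{tr}\,\rho(XYX^{-1}Y^{-1})=2$. Then either $\mathcal{E}(\rho)=\{X_0\}$ for a single element $X_0\in\mathscr{PL}$, or $\mathcal{E}(\rho)=\mathscr{PL}$. Furthermore, in the first case, if $X_0\in\mathscr{C}$ then $\mathrm{tr}\,\rho(X_0)\in[-2,2]$ and $\mathrm{tr}\,\rho(X)\notin[-2,2]$ for all $X\in\mathscr{C}\setminus\{X_0\}$, while if $X_0\notin\mathscr{C}$ then $\mathrm{tr}\,\rho(X)\notin[-2,2]$ for all $X\in\mathscr{C}$; and in the second case $\mathrm{tr}\,\rho(X)\in[-2,2]$ for all $X\in\mathscr{C}$.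
   Context: $T$ is the one-holed torus; $\pi=\pi_1(T)$ is free on generators $X,Y$. The character variety is $\mathcal{X}=\mathrm{Hom}(\pi,\mathrm{SL}(2,\mathbb{C}))/\!/\mathrm{SL}(2,\mathbb{C})$, identified with $\mathbb{C}^3$ via $\rho\mapsto(\mathrm{tr}\,\rho(X),\mathrm{tr}\,\rho(Y),\mathrm{tr}\,\rho(XY))$. For $\kappa\in\mathbb{C}$, $\mathcal{X}_\kappa=\{\rho:\mathrm{tr}\,\rho(XYX^{-1}Y^{-1})=\kappa\}$ (independent of the choice of free generators); it is the set of $(x,y,z)$ with $x^2+y^2+z^2-xyz-2=\kappa$. $\mathscr{C}$ is the set of free homotopy classes of essential (non-trivial, non-boundary-parallel) simple closed curves on $T$; $\mathrm{tr}\,\rho(W)$ is well defined for $W\in\mathscr{C}$. $\mathscr{PL}$ is the projective lamination space of $T$, identified with $\hat{\mathbb{R}}$ so that $\mathscr{C}$ corresponds to $\hat{\mathbb{Q}}$, with the topology of $\hat{\mathbb R}$. $\Lambda\in\mathscr{PL}$ is an end invariant of $\rho$ if there exist $K>0$ and distinct $X_n\in\mathscr{C}$ with $X_n\to\Lambda$ and $|\mathrm{tr}\,\rho(X_n)|<K$ for all $n$; $\mathcal{E}(\rho)$ is the set of end invariants. *)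

From HB Require Import structures.
From mathcomp Require Import all_boot all_order all_algebra.
From mathcomp Require Import complex reals.
Set Implicit Arguments. Unset Strict Implicit. Unset Printing Implicit Defensive.
Import Order.TTheory GRing.Theory Num.Theory.
Local Open Scope ring_scope.

Section OneHoledTorus.
Variable R : realType.
Local Notation C := (R[i]).

(* A representation rho : pi = <X,Y> -> SL(2,C) is given by the pair
   (A, B) = (rho X, rho Y) of 2x2 complex matrices of determinant 1. *)
Definition is_SL2 (A : 'M[C]_2) : Prop := \det A = 1.

Definition comm_trace (A B : 'M[C]_2) : C :=
  \tr (A *m B *m invmx A *m invmx B).

(* Essential simple closed curves on T <-> Q^ = option rat.
   The slope  Some (p/q)  (q > 0, gcd(p,q)=1) is the free homotopy class of
   the primitive element with abelianization q X + p Y, represented by the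
   Christoffel word with q letters X and |p| letters Y^(sign p);
   None (slope infinity) is the class of Y. *)
Definition curve := option rat.

(* i-th letter (0 <= i < n = q + m) of the Christoffel word with
   m letters "Y" and n - m letters "X": it is "Y" iff
   floor((i+1) m / n) <> floor(i m / n). *)
Definition christoffel_Y (n m i : nat) : bool := (((i.+1 * m) %/ n) != ((i * m) %/ n))%N.

Definition curve_mat (A B : 'M[C]_2) (c : curve) : 'M[C]_2 :=
  match c with
  | None => B
  | Some q =>
      let a := `|denq q|%N in
      let m := `|numq q|%N in
      let Bs := if numq q < 0 then invmx B else B in
      \prod_(i < a + m) (if christoffel_Y (a + m) m i then Bs else A)
  end.

Definition trc (A B : 'M[C]_2) (c : curve) : C := \tr (curve_mat A B c).

(* PL(T) identified with R^ = option R (None = infinity);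
   the curve of slope q in Q^ is the point q of R^. *)
Definition PL := option R.
Definition curve_to_PL (c : curve) : PL :=
  match c with None => None | Some q => Some (ratr q) end.

Definition cvg_hat (s : nat -> PL) (L : PL) : Prop :=
  match L with
  | Some r => forall e : R, 0 < e -> exists N : nat, forall n : nat, (N <= n)%N ->
                exists x : R, s n = Some x /\ `|x - r| < e
  | None => forall M : R, exists N : nat, forall n : nat, (N <= n)%N ->
                forall x : R, s n = Some x -> M < `|x|
  end.

Definition end_invariant (A B : 'M[C]_2) (L : PL) : Prop :=
  exists K : R, 0 < K /\
  exists X : nat -> curve, injective X /\
    cvg_hat (fun n => curve_to_PL (X n)) L /\
    forall n : nat, ComplexField.Normc.normc (trc A B (X n)) < K.

Definition in_m22 (t : C) : Prop := Im t = 0 /\ -2 <= Re t <= 2.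

End OneHoledTorus.
Arguments curve_to_PL {R} c.

(* Since tr [A, B] = 2, the commutator A B - B A is singular, so A and B have a
   common eigenvector w: w A = a w and w B = b w.  The word of a curve of slope
   p/q acts on w by nu = a^q b^p, hence its trace is nu + 1/nu, which lies in
   [-2, 2] iff |nu| = 1 and stays bounded iff ln |nu| = q ln |a| + p ln |b| does.
   Everything is thus governed by this linear form on slopes.  If it vanishes,
   all traces lie in [-2, 2] and every point of PL is an end invariant.
   Otherwise it vanishes exactly at one point X0 of PL: rational approximations
   of X0 with q |p/q - X0| <= 1 keep the form bounded, while near any other
   point bounded values of the form bound p and q, and only finitely many
   slopes have bounded p and q. *)

From HB Require Import structures.
From mathcomp Require Import all_boot all_order all_algebra.
From mathcomp Require Import spectral complex reals sequences exp.
From mathcomp Require Import ring lra zify.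
Import Order.TTheory GRing.Theory Num.Theory.
Local Open Scope ring_scope.

Set Implicit Arguments. Unset Strict Implicit. Unset Printing Implicit Defensive.

Section Matrix2.
Variable F : fieldType.
Implicit Types (A B M W : 'M[F]_2) (v w : 'rV[F]_2).

Lemma ord2P (i : 'I_2) : i = 0 \/ i = 1.
Proof. by case: i => [[|[|//]]] lti; [left | right]; apply: val_inj. Qed.

Lemma lift0_ord2 : lift 0 0 = 1 :> 'I_2. Proof. exact: val_inj. Qed.
Lemma lift1_ord2 : lift 1 0 = 0 :> 'I_2. Proof. exact: val_inj. Qed.

Lemma big_ord2 (f : 'I_2 -> F) : \sum_(i < 2) f i = f 0 + f 1.
Proof. by rewrite !big_ord_recl big_ord0 addr0 lift0_ord2. Qed.

Lemma mulmx2E m n (X : 'M[F]_(m, 2)) (Y : 'M[F]_(2, n)) i j :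
  (X *m Y) i j = X i 0 * Y 0 j + X i 1 * Y 1 j.
Proof. by rewrite mxE big_ord2. Qed.

Lemma mxtrace2 A : \tr A = A 0 0 + A 1 1.
Proof. exact: big_ord2. Qed.

Lemma det2 A : \det A = A 0 0 * A 1 1 - A 0 1 * A 1 0.
Proof.
rewrite (expand_det_row A 0) big_ord2 /cofactor !det_mx11 !mxE /=.
by rewrite lift0_ord2 lift1_ord2 expr0 expr1 mulN1r mul1r mulrN.
Qed.

Lemma adj2 A : \adj A = (\tr A)%:M - A.
Proof.
apply/matrixP => i j; rewrite !mxE /cofactor det_mx11 mxtrace2 !mxE.
by case: (ord2P i) => ->; case: (ord2P j) => -> /=; rewrite ?lift0_ord2 ?lift1_ord2 /=; ring.
Qed.

Lemma Cayley_Hamilton2 W : W *m W = \tr W *: W - (\det W)%:M.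
Proof.
apply/matrixP => i j; rewrite mulmx2E mxtrace2 det2 !mxE.
by case: (ord2P i) => ->; case: (ord2P j) => -> /=; ring.
Qed.

Lemma det_commutator2 A B :
  \det (A *m B - B *m A) = 2 * \det A * \det B - \tr (A *m B *m \adj A *m \adj B).
Proof.
rewrite !adj2 !det2 !mxtrace2 !(mulmx2E, mxE) /=.
ring.
Qed.

Lemma det_commutator_SL2 A B : \det A = 1 -> \det B = 1 ->
  \det (A *m B - B *m A) = 2 - \tr (A *m B *m invmx A *m invmx B).
Proof.
move=> detA detB; rewrite det_commutator2 detA detB /invmx !unitmxE detA detB.
by rewrite unitr1 invr1 !scale1r !mulr1.
Qed.

Definition cross2 v w := v 0 0 * w 0 1 - v 0 1 * w 0 0.

Lemma cross2_eq0_sub v w : v != 0 -> cross2 v w = 0 -> (w <= v)%MS.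
Proof.
move=> v0 /eqP; rewrite subr_eq0 => vw.
suff [c ->] : exists c, w = c *: v by exact: scalemx_sub.
have [v00|v00] := eqVneq (v 0 0) 0.
  have v01 : v 0 1 != 0.
    apply: contraNneq v0 => v01; apply/eqP/rowP => j; rewrite mxE.
    by case: (ord2P j) => ->.
  have w00 : w 0 0 = 0.
    by apply/eqP; move: vw; rewrite v00 mul0r eq_sym mulf_eq0 (negbTE v01).
  exists (w 0 1 / v 0 1); apply/rowP => j; rewrite mxE.
  by case: (ord2P j) => ->; rewrite ?v00 ?w00 ?mulr0 ?divfK.
exists (w 0 0 / v 0 0); apply/rowP => j; rewrite mxE.
case: (ord2P j) => ->; first by rewrite divfK.
by apply: (mulfI v00); rewrite (eqP vw); field.
Qed.

(* Being singular and traceless, K := A B - B A satisfies K ^+ 2 = 0, so its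
   rows lie in its left kernel, where every common eigenvector lives; this
   identity shows directly that they are eigenvectors. *)
Lemma cross2_commutator A B M i : M = A \/ M = B ->
  cross2 (row i (A *m B - B *m A)) (row i (A *m B - B *m A) *m M) =
  (if i == 0 then - M 0 1 else M 1 0) * \det (A *m B - B *m A).
Proof.
rewrite /cross2 det2 !(mulmx2E, mxE).
by case=> ->; case: (ord2P i) => -> /=; ring.
Qed.

Lemma commutator_common_eigenvector A B :
  \det (A *m B - B *m A) = 0 -> A *m B != B *m A ->
  exists2 w : 'rV_2, w != 0 & stablemx w A && stablemx w B.
Proof.
move=> detK0 ncommAB.
set K := A *m B - B *m A in detK0 *.
have [i Ki0] : exists i, row i K != 0.
  apply/existsP; apply: contraNT ncommAB; rewrite negb_exists => /forallP rows0.
  rewrite -subr_eq0 -/K; apply/eqP/row_matrixP => i.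
  by rewrite (eqP (negPn (rows0 i))) linear0.
have Ki_eigen M : M = A \/ M = B -> (row i K *m M <= row i K)%MS.
  by move=> /(cross2_commutator i); rewrite -/K detK0 mulr0; apply: cross2_eq0_sub.
exists (row i K) => //.
by apply/andP; split; apply: Ki_eigen; [left | right].
Qed.

End Matrix2.

Lemma SL2_common_eigenvector (C : numClosedFieldType) (A B : 'M[C]_2) :
  \det A = 1 -> \det B = 1 -> \tr (A *m B *m invmx A *m invmx B) = 2 ->
  exists2 w : 'rV_2, w != 0 & stablemx w A && stablemx w B.
Proof.
move=> detA detB trK.
have [commAB | ncommAB] := eqVneq (A *m B) (B *m A).
  exact: common_eigenvector2.
by apply: commutator_common_eigenvector => //; rewrite det_commutator_SL2 // trK subrr.
Qed.

Section Eigenvectors.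
Variable F : fieldType.

Lemma eigenvalue_neq0 n (M : 'M[F]_n) (w : 'rV_n) a :
  M \in unitmx -> w != 0 -> w *m M = a *: w -> a != 0.
Proof.
move=> Mu w0 wM; apply: contraNneq w0 => a0.
by rewrite -(mulmxK Mu w) wM a0 scale0r mul0mx.
Qed.

Lemma eigenvector_invmx n (M : 'M[F]_n) (w : 'rV_n) a :
  M \in unitmx -> a != 0 -> w *m M = a *: w -> w *m invmx M = a^-1 *: w.
Proof.
move=> Mu a0 wM; apply: (scalerI a0); rewrite scalerA mulfV // scale1r.
by rewrite scalemxAl -wM mulmxK.
Qed.

Lemma eigenvector_prod n k (w : 'rV[F]_n) (G : 'I_k -> 'M[F]_n) (g : 'I_k -> F) :
  (forall i, w *m G i = g i *: w) -> w *m (\prod_i G i) = (\prod_i g i) *: w.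
Proof.
elim: k G g => [|k IHk] G g wG; first by rewrite !big_ord0 mulmx1 scale1r.
rewrite !big_ord_recr /= -mulmxE mulmxA (IHk _ (fun i => g (widen_ord (leqnSn k) i))) //.
by rewrite -scalemxAl wG scalerA.
Qed.

Lemma mxtrace_SL2_eigenvector (W : 'M[F]_2) (w : 'rV_2) x :
  \det W = 1 -> w != 0 -> w *m W = x *: w -> \tr W = x + x^-1.
Proof.
move=> detW w0 wW.
have x0 : x != 0 by apply: eigenvalue_neq0 wW; rewrite // unitmxE detW unitr1.
have : (x ^+ 2 - \tr W * x + 1) *: w = 0.
  have := congr1 (mulmx w) (Cayley_Hamilton2 W).
  rewrite mulmxA wW -scalemxAl wW mulmxBr -scalemxAr wW detW mul_mx_scalar.
  move=> /eqP; rewrite -subr_eq0 !scalerA => /eqP <-.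
  by rewrite !scalerDl scaleNr expr2 opprB addrA addrAC.
move=> /eqP; rewrite scalemx_eq0 (negbTE w0) orbF => /eqP charx.
apply: (mulIf x0); rewrite mulrDl mulVf // -[RHS]subr0 -charx.
ring.
Qed.

End Eigenvectors.

Lemma christoffel_count_bounds n m k : (m <= n)%N -> (0 < n)%N ->
  [/\ (k * m %/ n <= k)%N, (k * m %/ n <= k.+1 * m %/ n)%N &
      (k.+1 * m %/ n <= (k * m %/ n).+1)%N].
Proof.
move=> mn n0; split.
- by rewrite -{2}(mulnK k n0) leq_div2r // leq_mul2l mn orbT.
- by rewrite leq_div2r // leq_mul2r leqnSn orbT.
- have : (k.+1 * m %/ n <= (n + k * m) %/ n)%N by rewrite leq_div2r // mulSn; lia.
  by rewrite divnDl // divnn n0 add1n.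
Qed.

Lemma prod_christoffel (R : comNzRingType) n m (x y : R) : (m <= n)%N -> (0 < n)%N ->
  \prod_(i < n) (if christoffel_Y n m i then x else y) = x ^+ m * y ^+ (n - m).
Proof.
move=> mn n0.
suff prefix k : \prod_(i < k) (if christoffel_Y n m i then x else y) =
    x ^+ (k * m %/ n) * y ^+ (k - k * m %/ n) by rewrite prefix mulKn.
elim: k => [|k IHk]; first by rewrite big_ord0 mul0n div0n expr0 mul1r.
rewrite big_ord_recr /= IHk /christoffel_Y.
have [le_k le_kSk le_Skk] := christoffel_count_bounds k mn n0.
case: eqP => [-> | neq] /=.
  by rewrite subSn // exprS; ring.
have -> : (k.+1 * m %/ n = (k * m %/ n).+1)%N.
  by apply/eqP; rewrite eqn_leq le_Skk ltn_neqAle le_kSk andbT; apply/eqP => /esym.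
by rewrite subSS exprS; ring.
Qed.

Section CurveMatrices.
Variable R : realType.
Local Notation C := R[i].
Implicit Types (A B : 'M[C]_2) (w : 'rV[C]_2).

Definition curve_eigenvalue (a b : C) (c : curve) : C :=
  match c with
  | None => b
  | Some q => a ^+ `|denq q| * (if numq q < 0 then b^-1 else b) ^+ `|numq q|
  end.

Lemma curve_mat_eigenvector A B w a b c : B \in unitmx -> w != 0 ->
  w *m A = a *: w -> w *m B = b *: w ->
  w *m curve_mat A B c = curve_eigenvalue a b c *: w.
Proof.
case: c => [q|] Bu w0 wA wB //=.
set bs := if numq q < 0 then b^-1 else b.
have wBs : w *m (if numq q < 0 then invmx B else B) = bs *: w.
  rewrite /bs; case: ifP => // _.
  by apply: eigenvector_invmx; rewrite // (eigenvalue_neq0 Bu w0 wB).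
set n := (`|denq q| + `|numq q|)%N.
rewrite (eigenvector_prod
  (g := fun i : 'I_n => if christoffel_Y n `|numq q| i then bs else a)).
  by rewrite prod_christoffel ?leq_addl ?addn_gt0 ?absz_gt0 ?denq_neq0 // addnK mulrC.
by move=> i; case: ifP.
Qed.

Lemma det_curve_mat A B c : \det A = 1 -> \det B = 1 -> \det (curve_mat A B c) = 1.
Proof.
case: c => [q|] detA detB //=.
apply: (big_ind (fun M : 'M[C]_2 => \det M = 1)) => [|M N detM detN|i _].
- exact: det1.
- by rewrite -mulmxE det_mulmx detM detN mulr1.
- by case: ifP => _; rewrite // (fun_if determinant) det_inv detB invr1 if_same.
Qed.

End CurveMatrices.

Definition curve_form (R : numDomainType) (la lb : R) (c : curve) : R :=
  match c with
  | None => lb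
  | Some q => (denq q)%:~R * la + (numq q)%:~R * lb
  end.

Section ComplexTraces.
Variable R : realType.
Local Notation C := R[i].
Local Notation normc := (@ComplexField.Normc.normc R).

Lemma in_m22E (t : C) : in_m22 t <-> complex.Im t = 0 /\ -2 <= complex.Re t <= 2.
Proof.
have two : (2 : C) = ((2 : R)%:C)%C by rewrite rmorph_nat.
rewrite /in_m22 -complexIm -complexRe two -rmorphN !lecR.
by split=> -[Im0 Re2]; split=> //; [case: Im0 | rewrite Im0].
Qed.

Lemma normc_ge0 (z : C) : 0 <= normc z.
Proof. by case: z => a b; rewrite sqrtr_ge0. Qed.

Lemma normc_gt0 (z : C) : z != 0 -> 0 < normc z.
Proof.
move=> z0; rewrite lt_def normc_ge0 andbT.
by apply: contraNneq z0 => /ComplexField.Normc.eq0_normc ->.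
Qed.

Lemma normcX (z : C) n : normc (z ^+ n) = normc z ^+ n.
Proof.
elim: n => [|n IHn]; first by rewrite !expr0 ComplexField.Normc.normc1.
by rewrite !exprS ComplexField.Normc.normcM IHn.
Qed.

Lemma normc_le_addV (z : C) : normc z <= normc (z + z^-1) + normc z^-1.
Proof. by have := @le_normcD R (z + z^-1) (- z^-1); rewrite addrK normcN. Qed.

Lemma in_m22_addV (x : C) : x != 0 -> in_m22 (x + x^-1) <-> normc x = 1.
Proof.
case: x => a b x0; rewrite in_m22E.
have n0 : 0 < a ^+ 2 + b ^+ 2 by have := normc_gt0 x0; rewrite sqrtr_gt0.
have -> : (normc (a +i* b)%C = 1) <-> (a ^+ 2 + b ^+ 2 = 1).
  split=> n1; last by rewrite /= n1 sqrtr1.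
  by rewrite -(sqr_sqrtr (ltW n0)) [Num.sqrt _]n1 expr1n.
simpc; rewrite /=; set n := a ^+ 2 + b ^+ 2.
have n_neq0 : n != 0 by rewrite gt_eqF.
split=> [[Im0 /andP[t_ge t_le]] | n1]; last first.
  rewrite n1 !divr1 subrr; split=> //.
  by rewrite /n in n1; apply/andP; split; nra.
have /eqP : b * (n - 1) = 0.
  have -> : b * (n - 1) = n * (b - b / n) by field.
  by rewrite Im0 mulr0.
rewrite mulf_eq0 subr_eq0 => /orP[/eqP b0 | /eqP //].
move: t_ge t_le n_neq0; rewrite /n b0 expr0n addr0 /= => t_ge t_le a2_neq0.
have a0 : a != 0 by apply: contraNneq a2_neq0 => ->; rewrite expr0n.
set t := a + a / a ^+ 2 in t_ge t_le.
have ta : t * a = a ^+ 2 + 1 by rewrite /t; field.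
have : (a ^+ 2 - 1) ^+ 2 <= 0.
  have -> : (a ^+ 2 - 1) ^+ 2 = (t * a) ^+ 2 - 4 * a ^+ 2 by rewrite ta; ring.
  have -> : (t * a) ^+ 2 - 4 * a ^+ 2 = - (a ^+ 2 * ((2 - t) * (2 + t))) by ring.
  by rewrite oppr_le0 mulr_ge0 ?sqr_ge0 // mulr_ge0 //; lra.
by rewrite le_eqVlt ltNge sqr_ge0 orbF sqrf_eq0 subr_eq0 => /eqP.
Qed.

Lemma normc_le_addV1 (x : C) : x != 0 -> normc x <= normc (x + x^-1) + 1.
Proof.
move=> x0; have r0 := normc_gt0 x0.
have [r_le1 | r_gt1] := lerP (normc x) 1.
  by rewrite -[normc x]add0r lerD ?normc_ge0.
have rV_lt1 : normc x^-1 < 1 by rewrite ComplexField.Normc.normcV invf_lt1.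
by apply: (le_trans (normc_le_addV x)); rewrite lerD2l ltW.
Qed.

Lemma normr_ln_normc_lt (x : C) K :
  x != 0 -> normc (x + x^-1) < K -> `|ln (normc x)| < ln (K + 1).
Proof.
move=> x0 tK; have r0 := normc_gt0 x0.
have K1 : 0 < K + 1 by have := normc_ge0 (x + x^-1); lra.
have r_lt : normc x < K + 1 by apply: le_lt_trans (normc_le_addV1 x0) _; rewrite ltrD2r.
have rV_lt : normc x^-1 < K + 1.
  apply: le_lt_trans (normc_le_addV1 (invr_neq0 x0)) _.
  by rewrite invrK [x^-1 + _]addrC ltrD2r.
rewrite ltr_norml -ltrNl -lnV ?posrE // -ComplexField.Normc.normcV.
by rewrite !ltr_ln ?posrE ?r_lt ?rV_lt ?normc_gt0 ?invr_neq0.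
Qed.

Lemma normc_addV_le_expR (x : C) M : x != 0 -> `|ln (normc x)| <= M ->
  normc (x + x^-1) <= 2 * expR M.
Proof.
move=> x0; have r0 := normc_gt0 x0.
rewrite ler_norml => /andP[lnM_ge lnM_le].
have r_le : normc x <= expR M by rewrite -[normc x]lnK ?posrE // ler_expR.
have rV_le : normc x^-1 <= expR M.
  rewrite ComplexField.Normc.normcV -[_^-1]lnK ?posrE ?invr_gt0 // ler_expR.
  by rewrite lnV ?posrE // lerNl.
by apply: (le_trans (le_normcD x x^-1)); rewrite mulr2n mulrDl mul1r lerD.
Qed.

Lemma ln_normc_curve_eigenvalue (a b : C) c : a != 0 -> b != 0 ->
  ln (normc (curve_eigenvalue a b c)) = curve_form (ln (normc a)) (ln (normc b)) c.
Proof.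
case: c => [q|] a0 b0 //=.
have bs0 : (if numq q < 0 then b^-1 else b) != 0 by case: ifP; rewrite ?invr_eq0.
rewrite ComplexField.Normc.normcM !normcX lnM ?posrE ?exprn_gt0 ?normc_gt0 //.
rewrite !lnXn ?normc_gt0 //.
rewrite -[ln _ *+ `|denq q|%N]mulr_natr -[ln _ *+ `|numq q|%N]mulr_natr !natr_absz.
rewrite gtr0_norm ?denq_gt0 // mulrC; congr (_ + _).
case: ifP => [num_lt0 | /negbT num_ge0].
  rewrite ComplexField.Normc.normcV lnV ?posrE ?normc_gt0 //.
  by rewrite ltr0_norm // mulrNz mulrNN mulrC.
by rewrite ger0_norm ?leNgt // mulrC.
Qed.

End ComplexTraces.

Lemma denq_odd_dyadic (k : int) n : odd `|k| -> denq (k%:~R / (2 ^ n)%:R) = (2 ^ n)%N.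
Proof.
move=> k_odd; rewrite (@coprimeq_den k (2 ^ n)%N) ?eqz_nat ?expn_eq0 //.
by apply: coprimeXr; rewrite coprimen2.
Qed.

Lemma dyadic_approx (R : realType) (r : R) : exists X : nat -> rat,
  [/\ injective X,
      forall e, 0 < e -> exists N, forall n, (N <= n)%N -> `|ratr (X n) - r| < e &
      forall n, (denq (X n))%:~R * `|ratr (X n) - r| <= 1].
Proof.
pose f n := Num.floor (r * (2 ^ n)%:R).
(* Odd numerators make the denominators exactly 2 ^ n, hence X injective. *)
pose k n := if odd `|f n| then f n else f n + 1.
have k_odd n : odd `|k n| by rewrite /k; case: ifP => //; lia.
have k_near n : `|(k n)%:~R - r * (2 ^ n)%:R| <= 1.
  have /andP[f_le f_gt] := floor_itv (r * (2 ^ n)%:R).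
  by rewrite /k ler_norml; case: ifP; rewrite ?intrD /=; lra.
pose X n : rat := (k n)%:~R / (2 ^ n)%:R.
have two_pos n : (0 : R) < (2 ^ n)%:R by rewrite ltr0n expn_gt0.
have dist n : (2 ^ n)%:R * `|ratr (X n) - r| <= 1.
  rewrite -[X in X * _]gtr0_norm // -normrM mulrBr /X fmorph_div.
  by rewrite rmorph_int rmorph_nat mulrC divfK ?gt_eqF // [_ * r]mulrC.
exists X; split.
- move=> n m /(congr1 denq); rewrite !denq_odd_dyadic // => /eqP.
  by rewrite eqz_nat => /eqP /expnI; apply.
- move=> e e0; exists (Num.Def.archi_bound e^-1) => n n_ge.
  have n_gt : e^-1 < n%:R.
    have eV_ge0 : 0 <= e^-1 by rewrite invr_ge0 ltW.
    by apply: lt_le_trans (archi_boundP eV_ge0) _; rewrite ler_nat.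
  have n2 : (n%:R : R) < (2 ^ n)%:R by rewrite ltr_nat ltn_expl.
  rewrite -(ltr_pM2l (two_pos n)); apply: le_lt_trans (dist n) _.
  by rewrite -ltr_pdivrMr // div1r (lt_trans n_gt n2).
- by move=> n; rewrite denq_odd_dyadic ?dist.
Qed.

Lemma bounded_rats_finite (R : realType) (D : R) : exists s : seq rat,
  forall x : rat, (denq x)%:~R <= D -> `|(numq x)%:~R| <= D -> x \in s.
Proof.
pose Dn := Num.Def.archi_bound `|D|.
have D_lt : D < Dn%:R by apply: le_lt_trans (ler_norm D) (archi_boundP _).
pose zs := [seq k%:Z - Dn%:Z | k <- iota 0 (2 * Dn).+1].
have zsP (z : int) : `|z%:~R : R| <= D -> z \in zs.
  move=> z_le; have : `|z| < Dn%:Z by rewrite -(ltr_int R) intr_norm (le_lt_trans z_le).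
  by move=> z_lt; apply/mapP; exists (absz (z + Dn%:Z)); rewrite ?mem_iota; lia.
exists [seq i%:~R / j%:~R | i <- zs, j <- zs] => x den_le num_le.
rewrite -[x]divq_num_den.
apply: (allpairs_f (fun i j : int => (i%:~R / j%:~R : rat))); apply: zsP => //.
by rewrite gtr0_norm // ltr0z denq_gt0.
Qed.

Lemma not_eventually_in_seq (T : eqType) (X : nat -> T) (s : seq T) N :
  injective X -> ~ (forall n, (N <= n)%N -> X n \in s).
Proof.
move=> X_inj X_in.
have uniqX : uniq (map X (iota N (size s).+1)) by rewrite map_inj_uniq // iota_uniq.
have subX : {subset map X (iota N (size s).+1) <= s}.
  by move=> y /mapP[n]; rewrite mem_iota => /andP[n_ge _] ->; apply: X_in.
by have := uniq_leq_size uniqX subX; rewrite size_map size_iota ltnn.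
Qed.

Lemma not_eventually_bounded_rats (R : realType) (X : nat -> curve) N (D : R) :
  injective X ->
  ~ (forall n, (N <= n)%N -> forall x, X n = Some x ->
       (denq x)%:~R <= D /\ `|(numq x)%:~R| <= D).
Proof.
move=> X_inj X_bd; have [s sP] := bounded_rats_finite D.
apply: (not_eventually_in_seq (s := None :: map Some s) X_inj) => n n_ge.
case E : (X n) => [x|]; last exact: mem_head.
by have [den_le num_le] := X_bd n n_ge x E; rewrite in_cons map_f ?orbT ?sP.
Qed.

Lemma normr_affine_ge_half (R : realFieldType) (la lb r : R) : la + lb * r != 0 ->
  exists2 d, 0 < d <= 1 &
    forall x, `|x - r| < d -> `|la + lb * r| / 2 <= `|la + lb * x|.
Proof.
move=> v_neq0; have c0 : 0 < `|la + lb * r| / 2 by rewrite divr_gt0 ?normr_gt0.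
set c := `|la + lb * r| / 2 in c0 *.
have two_c : `|la + lb * r| = 2 * c by rewrite /c; field.
exists (Num.min 1 (c / (`|lb| + 1))).
  by rewrite lt_min ltr01 divr_gt0 ?ltr_wpDl ?ge_min ?lexx.
move=> x; rewrite lt_min => /andP[_ xr].
have lbd : `|lb| * `|x - r| <= c.
  have frac_le : `|lb| / (`|lb| + 1) <= 1 by rewrite ler_pdivrMr ?mul1r ?lerDl ?ltr_wpDl.
  apply: le_trans (ler_wpM2l (normr_ge0 lb) (ltW xr)) _.
  by rewrite mulrCA -[X in _ <= X]mulr1 ler_wpM2l // ltW.
have := ler_normD (la + lb * x) (lb * (r - x)).
rewrite -addrA -mulrDr (addrC x) subrK normrM distrC; lra.
Qed.

Lemma numq_ratr (R : numFieldType) (q : rat) : (numq q)%:~R = (denq q)%:~R * ratr q :> R.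
Proof. by rewrite /ratr mulrC divfK // intr_eq0 denq_neq0. Qed.

Lemma curve_to_PL_inj (R : realType) : injective (@curve_to_PL R).
Proof. by case=> [x|] [y|] //= [/fmorph_inj ->]. Qed.

(* [end_invariant A B] is [trace_end_invariant (trc A B)] by definition. *)
Definition trace_end_invariant (R : realType) (tr : curve -> R[i]) (L : PL R) : Prop :=
  exists K : R, 0 < K /\
  exists X : nat -> curve, injective X /\
    cvg_hat (fun n => curve_to_PL (X n)) L /\
    forall n, ComplexField.Normc.normc (tr (X n)) < K.

Section EndInvariants.
Variable R : realType.
Local Notation normc := (@ComplexField.Normc.normc R).
Variables (tr nu : curve -> R[i]) (la lb : R).
Hypothesis nu_neq0 : forall c, nu c != 0.
Hypothesis tr_nu : forall c, tr c = nu c + (nu c)^-1.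
Hypothesis ln_normc_nu : forall c, ln (normc (nu c)) = curve_form la lb c.

Lemma in_m22_tr c : in_m22 (tr c) <-> curve_form la lb c = 0.
Proof.
rewrite tr_nu in_m22_addV // -ln_normc_nu.
split=> [->|/eqP]; first by rewrite ln1.
by rewrite ln_eq0 ?normc_gt0 // => /eqP.
Qed.

Lemma normr_curve_form_lt c K : normc (tr c) < K -> `|curve_form la lb c| < ln (K + 1).
Proof. by rewrite tr_nu -ln_normc_nu; apply: normr_ln_normc_lt. Qed.

Lemma normc_tr_le c M : `|curve_form la lb c| <= M -> normc (tr c) <= 2 * expR M.
Proof. by rewrite tr_nu -ln_normc_nu; apply: normc_addV_le_expR. Qed.

Lemma normr_curve_form_Some q :
  `|curve_form la lb (Some q)| = (denq q)%:~R * `|la + lb * ratr q|.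
Proof.
have den_gt0 : (0 : R) < (denq q)%:~R by rewrite ltr0z denq_gt0.
rewrite -[X in _ = X * _]gtr0_norm // -normrM; congr `|_|.
by rewrite /= numq_ratr; ring.
Qed.

Lemma end_invariant_Some r M :
  (forall q, (denq q)%:~R * `|ratr q - r| <= 1 -> `|curve_form la lb (Some q)| <= M) ->
  trace_end_invariant tr (Some r).
Proof.
move=> form_le; have [X [X_inj X_cvg X_close]] := dyadic_approx r.
exists (2 * expR M + 1); split; first by have := expR_gt0 M; lra.
exists (fun n => Some (X n)); split; first by move=> n m [/X_inj].
split; last by move=> n; rewrite (le_lt_trans (normc_tr_le (form_le _ (X_close n)))) ?ltrDl.
move=> e e0; have [N XN] := X_cvg e e0; exists N => n n_ge.
by exists (ratr (X n)); split; last exact: XN.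
Qed.

Lemma end_invariant_None M :
  (forall n : nat, `|curve_form la lb (Some n%:R)| <= M) -> trace_end_invariant tr None.
Proof.
move=> form_le; exists (2 * expR M + 1); split; first by have := expR_gt0 M; lra.
exists (fun n => Some n%:R); split; first by move=> n m [/eqP]; rewrite eqr_nat => /eqP.
split; last by move=> n; apply: le_lt_trans (normc_tr_le (form_le n)) _; rewrite ltrDl.
move=> B; exists (Num.Def.archi_bound `|B|) => n n_ge x [<-].
rewrite ratr_nat normr_nat; apply: le_lt_trans (ler_norm B) _.
by apply: lt_le_trans (archi_boundP (normr_ge0 B)) _; rewrite ler_nat.
Qed.

Lemma end_invariant_Some_root r : trace_end_invariant tr (Some r) -> la + lb * r = 0.
Proof.
move=> [K [_ [X [X_inj [X_cvg X_bd]]]]]; apply/eqP/negPn/negP => v_neq0.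
have c0 : 0 < `|la + lb * r| / 2 by rewrite divr_gt0 ?normr_gt0.
set c := `|la + lb * r| / 2 in c0; set M := ln (K + 1).
have [d /andP[d0 d_le1] far] := normr_affine_ge_half v_neq0.
have [N XN] := X_cvg d d0.
apply: (not_eventually_bounded_rats (N := N) (D := M / c * (`|r| + 1)) X_inj).
move=> n n_ge x Xn; have [y []] := XN n n_ge; rewrite Xn => -[<-] xr.
have form_lt := normr_curve_form_lt (X_bd n).
rewrite -/M Xn normr_curve_form_Some in form_lt.
have den_gt0 : (0 : R) < (denq x)%:~R by rewrite ltr0z denq_gt0.
have den_le : (denq x)%:~R <= M / c.
  rewrite ler_pdivlMr //; apply: le_trans _ (ltW form_lt).
  exact: ler_wpM2l (ltW den_gt0) _ _ (far _ xr).
have x_le : `|ratr x| <= `|r| + 1.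
  by have := ler_normD (ratr x - r) r; rewrite subrK; lra.
have Mc0 : 0 <= M / c by apply: le_trans den_le; apply: ltW.
split; first by apply: le_trans den_le _; rewrite -[X in X <= _]mulr1 ler_wpM2l // lerDr.
by rewrite numq_ratr normrM gtr0_norm // (ler_pM (ltW den_gt0) (normr_ge0 _) den_le x_le).
Qed.

Lemma end_invariant_None_root : trace_end_invariant tr None -> lb = 0.
Proof.
move=> [K [_ [X [X_inj [X_cvg X_bd]]]]]; apply/eqP/negPn/negP => lb_neq0.
have lb0 : 0 < `|lb| by rewrite normr_gt0.
set M := ln (K + 1).
have [N XN] := X_cvg ((`|la| + 1) / `|lb|).
apply: (not_eventually_bounded_rats (N := N) (D := M + (M + M * `|la|) / `|lb|) X_inj).
move=> n n_ge x Xn; have x_big : `|la| + 1 < `|lb| * `|ratr x|.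
  by rewrite -ltr_pdivrMl // mulrC (XN n n_ge) ?Xn.
have form_lt := normr_curve_form_lt (X_bd n).
rewrite -/M Xn normr_curve_form_Some in form_lt.
have den_gt0 : (0 : R) < (denq x)%:~R by rewrite ltr0z denq_gt0.
have tri : `|lb| * `|ratr x| - `|la| <= `|la + lb * ratr x|.
  by have := ler_normD (la + lb * ratr x) (- la); rewrite addrC addKr normrN normrM; lra.
have den_lt : (denq x)%:~R < M.
  apply: le_lt_trans _ form_lt; rewrite -[X in X <= _]mulr1 ler_wpM2l ?(ltW den_gt0) //; lra.
have M0 : 0 <= M by apply: le_trans (ltW den_gt0) (ltW den_lt).
have num_le : (denq x)%:~R * (`|lb| * `|ratr x|) <= M + M * `|la|.
  have := ler_wpM2r (normr_ge0 la) (ltW den_lt).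
  have : (denq x)%:~R * (`|lb| * `|ratr x| - `|la|) <= M.
    exact: le_trans (ler_wpM2l (ltW den_gt0) tri) (ltW form_lt).
  rewrite mulrBr; lra.
have D0 : 0 <= (M + M * `|la|) / `|lb| by rewrite divr_ge0 ?addr_ge0 ?mulr_ge0.
split; first lra.
rewrite numq_ratr normrM gtr0_norm //.
have : (denq x)%:~R * `|ratr x| <= (M + M * `|la|) / `|lb|.
  by rewrite ler_pdivlMr // -mulrA [`|ratr x| * _]mulrC.
lra.
Qed.

Definition form_root : PL R := if lb != 0 then Some (- la / lb) else None.

Lemma curve_form_eq0 c : (la != 0) || (lb != 0) ->
  curve_form la lb c = 0 <-> curve_to_PL c = form_root.
Proof.
rewrite /form_root; have [->|lb_neq0 _] := eqVneq lb 0.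
  rewrite orbF /= => la_neq0; case: c => [q|] //=; split=> // /eqP.
  by rewrite mulr0 addr0 mulf_eq0 intr_eq0 denq_eq0 (negPf la_neq0).
case: c => [q|] /=; last by split=> // lb0; rewrite lb0 eqxx in lb_neq0.
have den_neq0 : (denq q)%:~R != 0 :> R by rewrite intr_eq0 denq_neq0.
rewrite numq_ratr -mulrA -mulrDr; split=> [/eqP|[->]]; last by rewrite divfK // subrr mulr0.
by rewrite mulf_eq0 (negPf den_neq0) addrC addr_eq0 => /eqP <-; rewrite mulfK.
Qed.

Lemma end_invariant_form_root : (la != 0) || (lb != 0) -> trace_end_invariant tr form_root.
Proof.
rewrite /form_root => _; have [lb0|lb_neq0] := eqVneq lb 0; rewrite ?lb0 ?eqxx /=.
  apply: (end_invariant_None (M := `|la|)) => n.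
  by rewrite /= (denq_int n) lb0 mulr0 addr0 mul1r.
apply: (end_invariant_Some (M := `|lb|)) => q den_close.
rewrite normr_curve_form_Some.
have -> : la + lb * ratr q = lb * (ratr q - - la / lb) by field.
by rewrite normrM mulrCA -[X in _ <= X]mulr1 ler_wpM2l.
Qed.

Lemma end_invariantP L : (la != 0) || (lb != 0) -> trace_end_invariant tr L <-> L = form_root.
Proof.
move=> nondeg; split=> [|->]; last exact: end_invariant_form_root.
rewrite /form_root.
case: L => [r /end_invariant_Some_root root | /end_invariant_None_root lb0].
  have [lb0|lb_neq0] := eqVneq lb 0.
    by move: nondeg root; rewrite lb0 eqxx orbF mul0r addr0 => /eqP la_neq0 /la_neq0.
  have -> : la = - (lb * r) by apply/eqP; rewrite -addr_eq0 root.
  by rewrite /= opprK [lb * r]mulrC mulfK.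
by rewrite lb0 eqxx.
Qed.

Lemma trace_end_invariants :
  (exists X0 : PL R,
     (forall L : PL R, trace_end_invariant tr L <-> L = X0) /\
     (forall c0 : curve, curve_to_PL c0 = X0 ->
        in_m22 (tr c0) /\ forall c : curve, c <> c0 -> ~ in_m22 (tr c)) /\
     ((forall c : curve, curve_to_PL c <> X0) -> forall c : curve, ~ in_m22 (tr c)))
  \/
  ((forall L : PL R, trace_end_invariant tr L) /\ forall c : curve, in_m22 (tr c)).
Proof.
have [nondeg | deg] := boolP ((la != 0) || (lb != 0)).
  left; exists form_root; split=> [L|]; first exact: end_invariantP.
  split=> [c0 c0_root | no_root c].
    split=> [|c c_neq0]; first exact/in_m22_tr/(curve_form_eq0 _ nondeg).
    by move/in_m22_tr/(curve_form_eq0 _ nondeg); rewrite -c0_root => /curve_to_PL_inj.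
  by move/in_m22_tr/(curve_form_eq0 _ nondeg)/no_root.
right; move: deg; rewrite negb_or !negbK => /andP[/eqP la0 /eqP lb0].
have form0 c : curve_form la lb c = 0 by case: c => [q|] //=; rewrite la0 lb0 !mulr0 addr0.
split=> [[r|]|c]; last exact/in_m22_tr/form0.
  by apply: (end_invariant_Some (M := 0)) => q _; rewrite form0 normr0.
by apply: (end_invariant_None (M := 0)) => n; rewrite form0 normr0.
Qed.

End EndInvariants.

Unset Implicit Arguments. Set Strict Implicit.

Theorem theorem1p3 (R : realType) (A B : 'M[R[i]]_2) :
  is_SL2 A -> is_SL2 B -> comm_trace A B = 2 ->
  (exists X0 : PL R,
     (forall L : PL R, end_invariant A B L <-> L = X0) /\
     (forall c0 : curve, curve_to_PL c0 = X0 ->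
        in_m22 (trc A B c0) /\
        forall c : curve, c <> c0 -> ~ in_m22 (trc A B c)) /\
     ((forall c : curve, curve_to_PL c <> X0) ->
        forall c : curve, ~ in_m22 (trc A B c)))
  \/
  ((forall L : PL R, end_invariant A B L) /\
   forall c : curve, in_m22 (trc A B c)).
Proof.
rewrite /is_SL2 /comm_trace => detA detB trK.
have [w w0 /andP[/eigenvectorP[a /eigenspaceP wA] /eigenvectorP[b /eigenspaceP wB]]] :=
  SL2_common_eigenvector detA detB trK.
have SL2_unit (M : 'M[R[i]]_2) : \det M = 1 -> M \in unitmx.
  by move=> detM; rewrite unitmxE detM unitr1.
have w_nu c := curve_mat_eigenvector c (SL2_unit B detB) w0 wA wB.
have det_c c := det_curve_mat c detA detB.
apply: (@trace_end_invariants R (trc A B) (curve_eigenvalue a b)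
  (ln (ComplexField.Normc.normc a)) (ln (ComplexField.Normc.normc b))) => c.
- exact: eigenvalue_neq0 (SL2_unit _ (det_c c)) w0 (w_nu c).
- exact: mxtrace_SL2_eigenvector (det_c c) w0 (w_nu c).
- exact: ln_normc_curve_eigenvalue (eigenvalue_neq0 (SL2_unit A detA) w0 wA)
    (eigenvalue_neq0 (SL2_unit B detB) w0 wB).
Qed.
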